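(* Let $Q$ be a finite quandle and let $D$ be a diagram of a knot $K$ with $\mathrm{col}_Q(D)>0$. Then there is a finite simple quandle $Q'$ with $|Q'|\le |Q|$ such that $\mathrm{col}_{Q'}(D)>0$.
   Context: A quandle is a set $C$ with a binary operation $*$ such that for all $a,b,c\in C$: (1) $a*a=a$; (2) for all $a,b$ there is a unique $x$ with $a*x=b$; (3) $a*(b*c)=(a*b)*(a*c)$. A quandle is simple if it has at least two elements and its only congruences (equivalence relations compatible with $*$) are the identity relation and the total relation; equivalently, it has no homomorphic images other than itself (up to isomorphism) and the one-element quandle. A knot diagram is a regular planar projection of an oriented tame knot, with over/under information recorded at each crossing. Arcs are the maximal unbroken pieces of the projection. At each crossing, $\alpha$ denotes the over-arc, $\beta$ the under-arc on the right of the oriented $\alpha$, and $\gamma$ the under-arc on its left. A $Q$-coloring of $D$ is a map $f$ from arcs to $Q$ with $f(\alpha)*f(\beta)=f(\gamma)$ at every crossing. It is trivial if it uses only one color. $\mathrm{col}_Q(D)$ is the number of non-trivial $Q$-colorings of $D$. *)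

From mathcomp Require Import all_boot.
Set Implicit Arguments. Unset Strict Implicit. Unset Printing Implicit Defensive.

Record quandle := Quandle {
  qcar :> finType;
  qop : qcar -> qcar -> qcar;
  qidem : forall a : qcar, qop a a = a;
  qdiv : forall a b : qcar, exists! x : qcar, qop a x = b;
  qdist : forall a b c : qcar, qop a (qop b c) = qop (qop a b) (qop a c)
}.

Definition congruence (Q : quandle) (R : Q -> Q -> Prop) : Prop :=
  (forall a, R a a) /\ (forall a b, R a b -> R b a) /\
  (forall a b c, R a b -> R b c -> R a c) /\
  (forall a a' b b', R a a' -> R b b' -> R (qop a b) (qop a' b')).

Definition simple_quandle (Q : quandle) : Prop :=
  1 < #|Q| /\
  forall R : Q -> Q -> Prop, congruence R ->
    (forall a b, R a b <-> a = b) \/ (forall a b, R a b).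

(** A diagram with n crossings has n arcs;
    walking along the oriented knot, arc i ends at the undercrossing i and arc
    (i+1 mod n) starts there.  [dover i] is the over-arc alpha at crossing i;
    [dsign i] records which of the two under-arcs lies on the right of the
    oriented over-arc: if true, beta = i and gamma = i+1, otherwise
    beta = i+1 and gamma = i.  A zero-crossing diagram (n = 0) has no
    crossings; we model it with no arcs, so it has no non-trivial colorings,
    as for the one-circle diagram. *)
Record diagram := Diagram {
  dn : nat;
  dover : 'I_dn -> 'I_dn;
  dsign : 'I_dn -> bool
}.

Definition dbeta (D : diagram) (i : 'I_(dn D)) : 'I_(dn D) :=
  if dsign i then i else ordS i.
Definition dgamma (D : diagram) (i : 'I_(dn D)) : 'I_(dn D) :=
  if dsign i then ordS i else i.

Definition is_coloring (Q : quandle) (D : diagram) (f : {ffun 'I_(dn D) -> Q}) : bool :=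
  [forall i : 'I_(dn D), qop (f (dover i)) (f (dbeta i)) == f (dgamma i)].

Definition nontrivial_coloring (Q : quandle) (D : diagram) (f : {ffun 'I_(dn D) -> Q}) : bool :=
  [exists i : 'I_(dn D), exists j : 'I_(dn D), f i != f j].

Definition col (Q : quandle) (D : diagram) : nat :=
  #|[set f : {ffun 'I_(dn D) -> Q} | is_coloring f && nontrivial_coloring f]|.

(** If [Q] is not simple, take a non-trivial congruence [e] and a non-trivial
    [Q]-coloring [f] of [D].  Either [f] meets two [e]-classes, and then its
    image in the quotient [Q/e] is a non-trivial coloring, or all colors of [f]
    lie in one [e]-class, which is a proper subquandle colored non-trivially by
    [f].  In both cases we get a strictly smaller quandle with a non-trivial
    coloring of [D], and we conclude by induction on [#|Q|]. *)

From mathcomp Require Import all_boot.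
From Stdlib Require Import Classical ClassicalEpsilon.

Set Implicit Arguments.
Unset Strict Implicit.
Unset Printing Implicit Defensive.

Lemma fin_surj_inj (T : finType) (f : T -> T) :
  (forall y, exists x, f x = y) -> injective f.
Proof.
move=> f_surj; apply: in2T; apply/(@image_injP _ _ f predT)/eqP.
by apply: eq_card => y; have [x <-] := f_surj y; rewrite image_f.
Qed.

Lemma card_sig_lt (T : finType) (P : pred T) (z : T) :
  ~~ P z -> #|{: {x | P x}}| < #|T|.
Proof.
move=> Pz; rewrite card_sig -(cardC P) -addn1 leq_add2l.
by apply/card_gt0P; exists z; rewrite !inE.
Qed.

Lemma qop_inj (Q : quandle) (a : Q) : injective (qop a).
Proof.
move=> x y Exy; have [z [_ z_uniq]] := qdiv a (qop a x).
by rewrite -(z_uniq x erefl) -(z_uniq y (esym Exy)).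
Qed.

Section InjQuandle.

Variables (T : finType) (op : T -> T -> T).
Hypothesis op_idem : forall a, op a a = a.
Hypothesis op_inj : forall a, injective (op a).
Hypothesis op_dist : forall a b c, op a (op b c) = op (op a b) (op a c).

Lemma inj_qdiv (a b : T) : exists! x, op a x = b.
Proof.
have [g opK gK] := injF_bij (@op_inj a).
by exists (g b); split=> [|x <-]; [exact: gK | rewrite opK].
Qed.

Definition inj_quandle : quandle := Quandle op_idem inj_qdiv op_dist.

End InjQuandle.

Lemma col_gt0 (Q : quandle) (D : diagram) :
  0 < col Q D <->
  exists f : {ffun 'I_(dn D) -> Q}, is_coloring f /\ nontrivial_coloring f.
Proof.
rewrite /col card_gt0; split=> [/set0Pn[f]|[f [f_col f_nt]]].
  by rewrite inE => /andP[]; exists f.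
by apply/set0Pn; exists f; rewrite inE f_col f_nt.
Qed.

Section Colorings.

Variables (D : diagram) (Q1 Q2 : quandle) (h : Q1 -> Q2).
Hypothesis h_hom : forall a b, h (qop a b) = qop (h a) (h b).

Lemma coloring_hom (f : {ffun 'I_(dn D) -> Q1}) :
  is_coloring f -> is_coloring [ffun i => h (f i)].
Proof.
by move=> /forallP f_col; apply/forallP => i; rewrite !ffunE -h_hom (eqP (f_col i)).
Qed.

Lemma coloring_hom_inj (f : {ffun 'I_(dn D) -> Q1}) :
  injective h -> is_coloring [ffun i => h (f i)] -> is_coloring f.
Proof.
move=> h_inj /forallP hf_col; apply/forallP => i; apply/eqP/h_inj.
by rewrite h_hom; move/eqP: (hf_col i); rewrite !ffunE.
Qed.

Lemma col_gt0_hom (f : {ffun 'I_(dn D) -> Q1}) (i j : 'I_(dn D)) :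
  is_coloring f -> h (f i) != h (f j) -> 0 < col Q2 D.
Proof.
move=> f_col hfij; apply/col_gt0; exists [ffun k => h (f k)].
split; first exact: coloring_hom.
by apply/existsP; exists i; apply/existsP; exists j; rewrite !ffunE.
Qed.

End Colorings.

Lemma congruence_class_qop (Q : quandle) (R : Q -> Q -> Prop) (a x y : Q) :
  congruence R -> R a x -> R a y -> R a (qop x y).
Proof. by case=> _ [_ [_ R_qop]] Rax Ray; rewrite -(qidem a); exact: R_qop. Qed.

Section SubQuandle.

Variables (Q : quandle) (P : pred Q).
Hypothesis P_qop : forall x y, P x -> P y -> P (qop x y).

Definition sub_qop (x y : {x | P x}) : {x | P x} :=
  exist P (qop (val x) (val y)) (P_qop (valP x) (valP y)).

Lemma sub_qop_idem x : sub_qop x x = x.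
Proof. by apply: val_inj; rewrite /= qidem. Qed.

Lemma sub_qop_inj x : injective (sub_qop x).
Proof. by move=> y z /(congr1 val) /qop_inj /val_inj. Qed.

Lemma sub_qop_dist x y z : sub_qop x (sub_qop y z) = sub_qop (sub_qop x y) (sub_qop x z).
Proof. by apply: val_inj; rewrite /= qdist. Qed.

Definition subquandle : quandle := inj_quandle sub_qop_idem sub_qop_inj sub_qop_dist.

Lemma card_subquandle (z : Q) : ~~ P z -> #|subquandle| < #|Q|.
Proof. exact: card_sig_lt. Qed.

Lemma col_gt0_subquandle (D : diagram) (f : {ffun 'I_(dn D) -> Q}) (i j : 'I_(dn D)) :
  is_coloring f -> (forall k, P (f k)) -> f i != f j -> 0 < col subquandle D.
Proof.
move=> f_col fP fij; pose g : {ffun 'I_(dn D) -> subquandle} := [ffun k => exist P (f k) (fP k)].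
have val_g : [ffun k => val (g k)] = f by apply/ffunP => k; rewrite !ffunE.
apply/col_gt0; exists g; split.
  by apply: (@coloring_hom_inj D subquandle Q val (fun _ _ => erefl) g val_inj); rewrite val_g.
by apply/existsP; exists i; apply/existsP; exists j; rewrite !ffunE.
Qed.

End SubQuandle.

Section Quotient.

Variables (Q : quandle) (e : rel Q).
Hypothesis e_cong : congruence (fun x y => e x y).

Let e_refl : reflexive e := e_cong.1.
Let e_sym : symmetric e.
Proof. by move=> x y; have [_ [sym _]] := e_cong; apply/idP/idP => /sym. Qed.
Let e_trans : transitive e.
Proof. by move=> y x z; have [_ [_ [trans _]]] := e_cong; exact: trans. Qed.

(* The quotient is realised on the set of fixed points of a class representative map. *)
Definition qrep (x : Q) : Q := odflt x [pick y | e x y].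

Lemma qrep_rel x : e x (qrep x).
Proof. by rewrite /qrep; case: pickP => [//|/(_ x)]; rewrite e_refl. Qed.

Lemma qrep_eq x y : e x y -> qrep x = qrep y.
Proof.
move=> exy; rewrite /qrep (@eq_pick _ (e x) (e y)) => [|z].
  by case: pickP => // /(_ y); rewrite e_refl.
by apply/idP/idP => [|eyz]; [apply: e_trans; rewrite e_sym | exact: e_trans eyz].
Qed.

Lemma qrepK x : qrep (qrep x) = qrep x.
Proof. by apply/esym/qrep_eq/qrep_rel. Qed.

Definition qclass := {x : Q | qrep x == x}.

Definition qproj (x : Q) : qclass := exist _ (qrep x) (introT eqP (qrepK x)).

Lemma qprojK (u : qclass) : qproj (val u) = u.
Proof. by apply: val_inj; exact/eqP/(valP u). Qed.

Lemma qproj_eqP x y : qproj x = qproj y <-> e x y.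
Proof.
split=> [/(congr1 val) /= Exy | /qrep_eq Exy]; last exact: val_inj.
by apply: e_trans (qrep_rel x) _; rewrite Exy e_sym qrep_rel.
Qed.

Definition quot_qop (u v : qclass) : qclass := qproj (qop (val u) (val v)).

Lemma qproj_qop x y : qproj (qop x y) = quot_qop (qproj x) (qproj y).
Proof. by apply/qproj_eqP; have [_ [_ [_ e_qop]]] := e_cong; apply: e_qop; exact: qrep_rel. Qed.

Lemma quot_qop_idem u : quot_qop u u = u.
Proof. by rewrite -(qprojK u) -qproj_qop qidem. Qed.

Lemma quot_qop_inj u : injective (quot_qop u).
Proof.
apply: fin_surj_inj => v; have [x [xE _]] := qdiv (val u) (val v).
by exists (qproj x); rewrite -{1}(qprojK u) -qproj_qop xE qprojK.
Qed.

Lemma quot_qop_dist u v w :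
  quot_qop u (quot_qop v w) = quot_qop (quot_qop u v) (quot_qop u w).
Proof. by rewrite -(qprojK u) -(qprojK v) -(qprojK w) -!qproj_qop qdist. Qed.

Definition quotient : quandle := inj_quandle quot_qop_idem quot_qop_inj quot_qop_dist.

Lemma card_quotient (a b : Q) : e a b -> a != b -> #|quotient| < #|Q|.
Proof.
move=> eab nab; have [z Nz] : exists z, qrep z != z.
  case: (eqVneq (qrep a) a) => [ra|nra]; last by exists a.
  by exists b; rewrite -(qrep_eq eab) ra.
exact: (@card_sig_lt Q (fun x => qrep x == x) z Nz).
Qed.

Lemma col_gt0_quotient (D : diagram) (f : {ffun 'I_(dn D) -> Q}) (i j : 'I_(dn D)) :
  is_coloring f -> ~~ e (f i) (f j) -> 0 < col quotient D.
Proof.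
move=> f_col efij; apply: (@col_gt0_hom D Q quotient qproj qproj_qop f i j f_col).
by apply: contra efij => /eqP /qproj_eqP.
Qed.

End Quotient.

Lemma congruence_reflect (Q : quandle) (R : Q -> Q -> Prop) (e : rel Q) :
  (forall x y, reflect (R x y) (e x y)) -> congruence R -> congruence (fun x y => e x y).
Proof.
move=> eP [R_refl [R_sym [R_trans R_qop]]]; split; [|split; [|split]].
- by move=> a; apply/eP.
- by move=> a b /eP /R_sym /eP.
- by move=> a b c /eP Rab /eP Rbc; apply/eP; exact: R_trans Rab Rbc.
- by move=> a a' b b' /eP Raa' /eP Rbb'; apply/eP; exact: R_qop.
Qed.

Lemma not_simple_congruence (Q : quandle) :
  1 < #|Q| -> ~ simple_quandle Q ->
  exists e : rel Q, [/\ congruence (fun x y => e x y),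
    exists a b, e a b && (a != b) & exists a b, ~~ e a b].
Proof.
move=> Q_gt1 Q_not_simple; apply: NNPP => no_e; apply: Q_not_simple; split=> // R R_cong.
pose e x y : bool := excluded_middle_informative (R x y).
have eP x y : reflect (R x y) (e x y) by exact: sumboolP.
have e_cong := congruence_reflect eP R_cong.
case: (classic (exists a b, R a b /\ a <> b)) => [[a [b [Rab nab]]] | R_id].
  right=> c d; apply: NNPP => nRcd; apply: no_e; exists e; split=> //.
    by exists a, b; apply/andP; split; [exact/eP | exact/eqP].
  by exists c, d; exact/eP.
left=> a b; split=> [Rab | <-]; last by have [R_refl _] := R_cong.
by apply: NNPP => nab; apply: R_id; exists a, b.
Qed.

Lemma smaller_coloring (Q : quandle) (D : diagram) :
  ~ simple_quandle Q -> 0 < col Q D -> exists Q' : quandle, #|Q'| < #|Q| /\ 0 < col Q' D.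
Proof.
move=> Q_not_simple /col_gt0 [f [f_col /existsP [i /existsP [j fij]]]].
have Q_gt1 : 1 < #|Q| by apply/card_gt1P; exists (f i), (f j).
have [e [e_cong [a [b /andP [eab nab]]] [c [d ecd]]]] :=
  not_simple_congruence Q_gt1 Q_not_simple.
case: (boolP [forall k, forall l, e (f k) (f l)]) => [/forallP f_one_class | ]; last first.
  rewrite negb_forall => /existsP [k]; rewrite negb_forall => /existsP [l efkl].
  exists (quotient e_cong); split; first exact: card_quotient eab nab.
  exact: col_gt0_quotient f_col efkl.
have class_qop x y : e (f i) x -> e (f i) y -> e (f i) (qop x y).
  exact: congruence_class_qop e_cong.
have [z ez] : exists z, ~~ e (f i) z.
  have [_ [e_sym [e_trans _]]] := e_cong.
  case: (boolP (e (f i) c)) => eic; last by exists c.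
  by exists d; apply: contra ecd => eid; apply: e_trans (e_sym _ _ eic) eid.
exists (subquandle class_qop); split; first exact: card_subquandle ez.
by apply: col_gt0_subquandle f_col _ fij => k; move/forallP: (f_one_class i).
Qed.

Theorem lemma2 (Q : quandle) (D : diagram) :
  0 < col Q D ->
  exists Q' : quandle, simple_quandle Q' /\ #|Q'| <= #|Q| /\ 0 < col Q' D.
Proof.
move=> colQ; have [n] := ubnP #|Q|; elim: n Q colQ => // n IH Q colQ lt_Qn.
case: (classic (simple_quandle Q)) => [Q_simple | Q_not_simple]; first by exists Q.
have [Q1 [lt_Q1Q colQ1]] := smaller_coloring Q_not_simple colQ.
have [Q' [Q'_simple [le_Q'Q1 colQ']]] := IH Q1 colQ1 (leq_trans lt_Q1Q (ltnSE lt_Qn)).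
by exists Q'; split=> //; split=> //; exact: leq_trans le_Q'Q1 (ltnW lt_Q1Q).
Qed.
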